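(* Let the observer be at $(1,0,0)$ and let $r=1$. For $\ell\ge 1$ let $R_\ell$ be the rectangle in the plane $x=0$ with vertices $(0,y_i,z_j)$, $i,j\in\{1,2\}$, where $$y_{1,2}=\frac{r}{\sqrt2}\mp\frac{\ell}{2},\qquad z_{1,2}=\frac{r}{\sqrt2}\mp\frac{1}{2\ell},$$ i.e. the rectangle of area $1$, sides $\ell$ (parallel to the $y$-axis) and $1/\ell$ (parallel to the $z$-axis), centered at $(0,r/\sqrt2,r/\sqrt2)$. Let $\Omega(\ell)$ be the solid angle subtended by $R_\ell$ at the observer. Then the maximum of $\Omega(\ell)$ over $\ell\ge1$ is attained at $\ell=1$ (the square).
   Context: The solid angle subtended at a point $P$ by a planar region $S$ is the area of the radial projection of $S$ onto the unit sphere centered at $P$. For an observer at $(x_0,0,0)$ with $x_0>0$ and the rectangle above, it equals $F(y_2,z_2)-F(y_1,z_2)-F(y_2,z_1)+F(y_1,z_1)$ where $F(y,z)=\arctan\!\big(yz/(x_0\sqrt{x_0^2+y^2+z^2})\big)$. *)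

From Stdlib Require Import Reals Lra.
Open Scope R_scope.

Definition solidF (x0 y z : R) : R :=
  atan (y * z / (x0 * sqrt (x0 ^ 2 + y ^ 2 + z ^ 2))).

(* Solid angle subtended at (x0,0,0) by the rectangle
   {0} x [y1,y2] x [z1,z2] in the plane x = 0. *)
Definition solid_angle_rect (x0 y1 y2 z1 z2 : R) : R :=
  solidF x0 y2 z2 - solidF x0 y1 z2 - solidF x0 y2 z1 + solidF x0 y1 z1.

Definition r0 : R := 1.

Definition Omega (l : R) : R :=
  solid_angle_rect 1
    (r0 / sqrt 2 - l / 2) (r0 / sqrt 2 + l / 2)
    (r0 / sqrt 2 - 1 / (2 * l)) (r0 / sqrt 2 + 1 / (2 * l)).

(* With U = (l + 1/l)/sqrt 2 and V = (l - 1/l)/sqrt 2 (so U^2 = V^2 + 2), the four corner terms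
   of Omega l are atan-expressions in U, -U, V and -V, and
     Omega'(l) = sqrt 8 / l * (U * (beta (-V) - beta V) - V * (alpha (-U) - alpha U)),
   where sqrt 8 * alpha and sqrt 8 * beta are the derivatives of the two kinds of corner terms.
   Rationalizing the square roots gives alpha (-u) - alpha u = u * EA u / alpha_den u and
   beta (-v) - beta v = v * EB v / beta_den v, so Omega' <= 0 follows from
     EB v / beta_den v <= 577 / sep_den (v^2) <= EA u / alpha_den u     for v <= 4.42
   (beyond, EB v < 0).  After replacing each square root by one Heron step from a linear guess,
   both bounds become polynomial inequalities on intervals, certified by expansions in
   Bernstein form with nonnegative coefficients. *)

From Stdlib Require Import Reals Lra Psatz List.
From Coquelicot Require Import Coquelicot.
Import ListNotations.
Open Scope R_scope.

(** * Polynomial certificates and square-root bounds *)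

Fixpoint bernstein (cs : list R) (a b : R) : R :=
  match cs with
  | [] => 0
  | c :: cs' => c * b ^ length cs' + a * bernstein cs' a b
  end.

Lemma bernstein_nonneg cs a b :
  List.Forall (Rle 0) cs -> 0 <= a -> 0 <= b -> 0 <= bernstein cs a b.
Proof.
  intros Hcs Ha Hb; induction Hcs as [|c cs Hc _ IH]; simpl; [lra|].
  apply Rplus_le_le_0_compat; apply Rmult_le_pos; auto using pow_le.
Qed.

Lemma nonneg_of_bernstein x d cs a b :
  0 < d -> x * d = bernstein cs a b -> List.Forall (Rle 0) cs -> 0 <= a -> 0 <= b -> 0 <= x.
Proof.
  intros Hd E Hcs Ha Hb.
  assert (H := bernstein_nonneg cs a b Hcs Ha Hb); rewrite <- E in H; nra.
Qed.

Definition heron (x m : R) : R := (x + m ^ 2) / (2 * m).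

Lemma sqrt_le_heron x m : 0 <= x -> 0 < m -> sqrt x <= heron x m.
Proof.
  intros Hx Hm; unfold heron.
  assert (Hs := sqrt_sqrt x Hx); assert (0 <= (sqrt x - m) ^ 2) by apply pow2_ge_0.
  apply Rmult_le_reg_r with (2 * m); [lra|].
  field_simplify; nra.
Qed.

Lemma div_heron_le_sqrt x m : 0 < x -> 0 < m -> x / heron x m <= sqrt x.
Proof.
  intros Hx Hm.
  assert (Hs := sqrt_sqrt x (Rlt_le _ _ Hx)); assert (H0 := sqrt_lt_R0 x Hx).
  assert (Hh := sqrt_le_heron x m (Rlt_le _ _ Hx) Hm).
  apply Rmult_le_reg_r with (heron x m); [lra|].
  field_simplify; nra.
Qed.

Lemma div_heron_pos x m : 0 < x -> 0 < m -> 0 < x / heron x m.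
Proof. intros Hx Hm; unfold heron; apply Rdiv_lt_0_compat; [|apply Rdiv_lt_0_compat]; nra. Qed.

Definition rat_den (a b p q s t : R) : R := (a * p * s + b * q * t) * s * t * p * q.

Lemma sub_div_sqrt a b p q x y :
  0 < x -> 0 < y -> rat_den a b p q (sqrt x) (sqrt y) <> 0 ->
  a / (sqrt y * q) - b / (sqrt x * p)
  = (a ^ 2 * p ^ 2 * x - b ^ 2 * q ^ 2 * y) / rat_den a b p q (sqrt x) (sqrt y).
Proof.
  intros Hx Hy HD; unfold rat_den in *.
  assert (Ex := sqrt_sqrt x (Rlt_le _ _ Hx)); assert (Ey := sqrt_sqrt y (Rlt_le _ _ Hy)).
  set (sx := sqrt x) in *; set (sy := sqrt y) in *.
  rewrite <- Ex, <- Ey; field.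
  repeat split; intros E; apply HD; rewrite E; ring.
Qed.

Lemma rat_den_le a b p q s s' t t' :
  0 <= a -> 0 <= b -> 0 <= p -> 0 <= q -> 0 <= s <= s' -> 0 <= t <= t' ->
  rat_den a b p q s t <= rat_den a b p q s' t'.
Proof.
  intros Ha Hb Hp Hq Hs Ht; unfold rat_den.
  assert (a * p * s + b * q * t <= a * p * s' + b * q * t') by
    (apply Rplus_le_compat; apply Rmult_le_compat_l; try lra; apply Rmult_le_pos; lra).
  assert (0 <= a * p * s + b * q * t) by
    (apply Rplus_le_le_0_compat; repeat apply Rmult_le_pos; lra).
  apply Rmult_le_compat_r; [lra|]; apply Rmult_le_compat_r; [lra|].
  apply Rmult_le_compat; [apply Rmult_le_pos; lra | lra | | lra].
  apply Rmult_le_compat; lra.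
Qed.

Lemma Rdiv_le_cross a b c d : 0 < b -> 0 < d -> a * d <= c * b -> a / b <= c / d.
Proof.
  intros Hb Hd H; apply Rmult_le_reg_r with (b * d); [nra|].
  replace (a / b * (b * d)) with (a * d) by (field; lra).
  replace (c / d * (b * d)) with (c * b) by (field; lra); exact H.
Qed.

Lemma rat_den_pos a b p q s t :
  0 < a * p * s + b * q * t -> 0 < p -> 0 < q -> 0 < s -> 0 < t -> 0 < rat_den a b p q s t.
Proof. intros; unfold rat_den; repeat apply Rmult_lt_0_compat; lra. Qed.

(** * The corner terms *)

Definition quadQ (e x : R) : R := x ^ 2 + 2 * x + e.
Definition quadP (c e x : R) : R := 8 * quadQ e x + (c + 2 * x) ^ 2.

Lemma quadQ_pos e x : 1 < e -> 0 < quadQ e x.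
Proof. intros He; unfold quadQ; pose proof (pow2_ge_0 (x + 1)); nra. Qed.

Lemma sqrt_quadQ_pos e x : 1 < e -> 0 < sqrt (quadQ e x).
Proof. intros He; apply sqrt_lt_R0, quadQ_pos, He. Qed.

Lemma quadP_pos c e x : 1 < e -> 0 < quadP c e x.
Proof.
  intros He; unfold quadP; pose proof (quadQ_pos e x He); pose proof (pow2_ge_0 (c + 2 * x)); lra.
Qed.

Definition corner (c e u : R) : R := atan ((c + 2 * u) / sqrt (8 * quadQ e u)).
Definition corner_slope (c e x : R) : R :=
  ((2 - c) * x + 2 * e - c) / (sqrt (quadQ e x) * quadP c e x).

Lemma corner_deriv c e u : 1 < e -> is_derive (corner c e) u (sqrt 8 * corner_slope c e u).
Proof.
  intros He; assert (HQ := quadQ_pos e u He).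
  unfold corner, corner_slope, quadP, quadQ in *.
  auto_derive.
  { split; [lra|split; [apply Rgt_not_eq, sqrt_lt_R0; lra | exact I]]. }
  replace (u * (u * 1)) with (u ^ 2) by ring.
  set (Q := u ^ 2 + 2 * u + e) in *.
  assert (SQ : 0 < sqrt Q) by (apply sqrt_lt_R0; lra).
  assert (S8 : 0 < sqrt 8) by (apply sqrt_lt_R0; lra).
  assert (E8 := sqrt_sqrt 8 ltac:(lra)).
  assert (ES := sqrt_sqrt (8 * Q) ltac:(lra)).
  assert (SS : 0 < sqrt (8 * Q)) by (apply sqrt_lt_R0; lra).
  set (S := sqrt (8 * Q)) in *.
  transitivity ((2 * (S * S) - 4 * (c + 2 * u) * (2 * u + 2)) / (S * (S * S + (c + 2 * u) ^ 2))).
  { pose proof (pow2_ge_0 (c + 2 * u)); field; split; nra. }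
  rewrite ES; unfold S; rewrite sqrt_mult by lra.
  replace (2 * (8 * Q) - 4 * (c + 2 * u) * (2 * u + 2))
    with (sqrt 8 * sqrt 8 * ((2 - c) * u + 2 * e - c)) by (rewrite E8; unfold Q; ring).
  pose proof (pow2_ge_0 (c + 2 * u)); field; repeat split; lra.
Qed.

Notation alpha := (corner_slope 3 3).
Notation beta := (corner_slope 1 5).

Lemma solidF_1_eq y z N Q :
  0 < Q -> y * z = N / 4 -> 1 + y ^ 2 + z ^ 2 = Q / 2 -> solidF 1 y z = atan (N / sqrt (8 * Q)).
Proof.
  intros HQ Eyz EQ; unfold solidF; f_equal.
  replace (1 ^ 2 + y ^ 2 + z ^ 2) with (Q / 2) by lra.
  replace (8 * Q) with (4 ^ 2 * (Q / 2)) by field.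
  rewrite Eyz, sqrt_mult, sqrt_pow2 by lra.
  assert (0 < sqrt (Q / 2)) by (apply sqrt_lt_R0; lra).
  field; lra.
Qed.

Lemma solidF_shift s a b k :
  s ^ 2 = 1 / 2 -> a * b = k -> k < 3 / 4 ->
  solidF 1 (s + a) (s + b) = corner (2 + 4 * k) (4 - 4 * k) (2 * s * (a + b)).
Proof.
  intros Hs Hab Hk; unfold corner.
  apply solidF_1_eq.
  - apply quadQ_pos; lra.
  - subst k; nra.
  - unfold quadQ.
    assert (s ^ 2 * (a + b) ^ 2 = (a + b) ^ 2 / 2) by (rewrite Hs; field).
    subst k; nra.
Qed.

Definition Ul (l : R) : R := (l + / l) / sqrt 2.
Definition Vl (l : R) : R := (l - / l) / sqrt 2.

Definition Omega_UV (l : R) : R :=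
  corner 3 3 (Ul l) + corner 3 3 (- Ul l) - corner 1 5 (Vl l) - corner 1 5 (- Vl l).

Lemma Omega_eq l : 0 < l -> Omega l = Omega_UV l.
Proof.
  intros Hl; unfold Omega, solid_angle_rect, r0, Omega_UV.
  assert (S2 : 0 < sqrt 2) by (apply sqrt_lt_R0; lra).
  assert (Hs : (1 / sqrt 2) ^ 2 = 1 / 2).
  { replace ((1 / sqrt 2) ^ 2) with (1 / sqrt 2 ^ 2) by (field; lra).
    rewrite pow2_sqrt by lra; reflexivity. }
  set (s := 1 / sqrt 2) in *.
  replace (s - l / 2) with (s + - (l / 2)) by ring.
  replace (s - 1 / (2 * l)) with (s + - (1 / (2 * l))) by ring.
  rewrite (solidF_shift s (l / 2) (1 / (2 * l)) (1 / 4)),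
    (solidF_shift s (- (l / 2)) (1 / (2 * l)) (- 1 / 4)),
    (solidF_shift s (l / 2) (- (1 / (2 * l))) (- 1 / 4)),
    (solidF_shift s (- (l / 2)) (- (1 / (2 * l))) (1 / 4)) by (try field; lra).
  replace (2 + 4 * (1 / 4)) with 3 by field; replace (4 - 4 * (1 / 4)) with 3 by field.
  replace (2 + 4 * (- 1 / 4)) with 1 by field; replace (4 - 4 * (- 1 / 4)) with 5 by field.
  replace (2 * s * (l / 2 + 1 / (2 * l))) with (Ul l) by (unfold Ul, s; field; lra).
  replace (2 * s * (- (l / 2) + - (1 / (2 * l)))) with (- Ul l) by (unfold Ul, s; field; lra).
  replace (2 * s * (l / 2 + - (1 / (2 * l)))) with (Vl l) by (unfold Vl, s; field; lra).
  replace (2 * s * (- (l / 2) + 1 / (2 * l))) with (- Vl l) by (unfold Vl, s; field; lra).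
  ring.
Qed.

(** * The derivative of Omega *)

Lemma derive_nonpos_le f df a b :
  a <= b -> (forall x, a <= x <= b -> is_derive f x (df x)) -> (forall x, a <= x <= b -> df x <= 0) ->
  f b <= f a.
Proof.
  intros Hab Hd Hneg.
  destruct (Req_dec a b) as [<- | Hne]; [lra|].
  destruct (MVT_gen f a b df) as [c [Hc E]].
  - intros x Hx; rewrite Rmin_left, Rmax_right in Hx by lra; apply Hd; lra.
  - intros x Hx; rewrite Rmin_left, Rmax_right in Hx by lra.
    apply continuity_pt_filterlim, (ex_derive_continuous (K := R_AbsRing) (V := R_NormedModule)).
    exists (df x); apply Hd; lra.
  - rewrite Rmin_left, Rmax_right in Hc by lra.
    assert (df c <= 0) by (apply Hneg; lra).
    nra.
Qed.

Lemma Ul_deriv l : 0 < l -> is_derive Ul l (Vl l / l).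
Proof.
  intros Hl; assert (0 < sqrt 2) by (apply sqrt_lt_R0; lra).
  unfold Ul, Vl; auto_derive; [apply Rgt_not_eq; lra|]; field; lra.
Qed.

Lemma Vl_deriv l : 0 < l -> is_derive Vl l (Ul l / l).
Proof.
  intros Hl; assert (0 < sqrt 2) by (apply sqrt_lt_R0; lra).
  unfold Ul, Vl; auto_derive; [apply Rgt_not_eq; lra|]; field; lra.
Qed.

Lemma Ul_Vl_facts l : 1 <= l -> 0 < Ul l /\ 0 <= Vl l /\ Ul l ^ 2 = Vl l ^ 2 + 2.
Proof.
  intros Hl; unfold Ul, Vl.
  assert (S2 : 0 < sqrt 2) by (apply sqrt_lt_R0; lra).
  assert (Hi : 0 < / l <= 1).
  { split; [apply Rinv_0_lt_compat; lra|]; rewrite <- Rinv_1; apply Rinv_le_contravar; lra. }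
  repeat split.
  - apply Rdiv_lt_0_compat; lra.
  - apply Rdiv_le_0_compat; lra.
  - unfold Rdiv; rewrite !Rpow_mult_distr, pow_inv, pow2_sqrt by lra; field; lra.
Qed.

Definition dOmega_UV (l : R) : R :=
  sqrt 8 / l * (Ul l * (beta (- Vl l) - beta (Vl l)) - Vl l * (alpha (- Ul l) - alpha (Ul l))).

Lemma Omega_UV_deriv l : 0 < l -> is_derive Omega_UV l (dOmega_UV l).
Proof.
  intros Hl.
  assert (DU := Ul_deriv l Hl); assert (DV := Vl_deriv l Hl).
  assert (DU' := is_derive_opp _ _ _ DU); assert (DV' := is_derive_opp _ _ _ DV).
  assert (H1 := is_derive_comp _ _ _ _ _ (corner_deriv 3 3 (Ul l) ltac:(lra)) DU).
  assert (H2 := is_derive_comp _ _ _ _ _ (corner_deriv 3 3 (- Ul l) ltac:(lra)) DU').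
  assert (H3 := is_derive_comp _ _ _ _ _ (corner_deriv 1 5 (Vl l) ltac:(lra)) DV).
  assert (H4 := is_derive_comp _ _ _ _ _ (corner_deriv 1 5 (- Vl l) ltac:(lra)) DV').
  assert (H := is_derive_minus _ _ _ _ _ (is_derive_minus _ _ _ _ _ (is_derive_plus _ _ _ _ _ H1 H2) H3) H4).
  match type of H with is_derive _ _ ?d => replace (dOmega_UV l) with d end.
  - apply (is_derive_ext _ _ _ _ (fun t => eq_refl) H).
  - unfold dOmega_UV, minus, plus, opp, scal; simpl; unfold mult; simpl; field; lra.
Qed.

(** * The odd parts of alpha and beta *)

Definition EA (u : R) : R := 178200 + 255888 * u ^ 2 + 71536 * u ^ 4 + 3648 * u ^ 6.
Definition EB (v : R) : R := 1570464 + 698304 * v ^ 2 + 27728 * v ^ 4 - 3648 * v ^ 6.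

Definition alpha_den (u : R) : R :=
  rat_den (3 + u) (3 - u) (quadP 3 3 u) (quadP 3 3 (- u)) (sqrt (quadQ 3 u)) (sqrt (quadQ 3 (- u))).
Definition beta_den (v : R) : R :=
  rat_den (9 - v) (9 + v) (quadP 1 5 v) (quadP 1 5 (- v)) (sqrt (quadQ 5 v)) (sqrt (quadQ 5 (- v))).

Lemma alpha_den_pos u : 0 < u -> 0 < alpha_den u.
Proof.
  intros Hu; unfold alpha_den.
  assert (HP := quadP_pos 3 3 (- u) ltac:(lra)); assert (S := sqrt_quadQ_pos 3 (- u) ltac:(lra)).
  assert (quadP 3 3 (- u) <= quadP 3 3 u) by (unfold quadP, quadQ; nra).
  assert (sqrt (quadQ 3 (- u)) <= sqrt (quadQ 3 u)) by (apply sqrt_le_1_alt; unfold quadQ; nra).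
  assert (quadP 3 3 (- u) * sqrt (quadQ 3 (- u)) <= quadP 3 3 u * sqrt (quadQ 3 u))
    by (apply Rmult_le_compat; lra).
  assert (0 < quadP 3 3 (- u) * sqrt (quadQ 3 (- u))) by (apply Rmult_lt_0_compat; lra).
  apply rat_den_pos; [nra | apply quadP_pos | lra | apply sqrt_quadQ_pos | lra]; lra.
Qed.

Lemma beta_den_pos v : 0 <= v <= 9 -> 0 < beta_den v.
Proof.
  intros Hv; unfold beta_den.
  assert (HP := quadP_pos 1 5 v ltac:(lra)); assert (HP' := quadP_pos 1 5 (- v) ltac:(lra)).
  assert (S := sqrt_quadQ_pos 5 v ltac:(lra)); assert (S' := sqrt_quadQ_pos 5 (- v) ltac:(lra)).
  apply rat_den_pos; try lra.
  apply Rplus_le_lt_0_compat; [repeat apply Rmult_le_pos | repeat apply Rmult_lt_0_compat]; lra.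
Qed.

Lemma alpha_odd_eq u :
  0 < u ->
  alpha (- u) - alpha u = u * EA u / alpha_den u.
Proof.
  intros Hu; unfold corner_slope.
  replace ((2 - 3) * - u + 2 * 3 - 3) with (3 + u) by ring.
  replace ((2 - 3) * u + 2 * 3 - 3) with (3 - u) by ring.
  assert (HD := alpha_den_pos u Hu); unfold alpha_den in *.
  rewrite sub_div_sqrt; try (apply quadQ_pos; lra); [|lra].
  f_equal; unfold EA, quadP, quadQ; ring.
Qed.

Lemma beta_odd_eq v :
  0 <= v <= 9 ->
  beta (- v) - beta v = v * EB v / beta_den v.
Proof.
  intros Hv; unfold corner_slope.
  replace ((2 - 1) * - v + 2 * 5 - 1) with (9 - v) by ring.
  replace ((2 - 1) * v + 2 * 5 - 1) with (9 + v) by ring.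
  assert (HD := beta_den_pos v Hv); unfold beta_den in *.
  rewrite sub_div_sqrt; try (apply quadQ_pos; lra); [|lra].
  f_equal; unfold EB, quadP, quadQ; ring.
Qed.

(* [577 / sep_den (v ^ 2)] separates the two rationalized odd parts; it was found numerically,
   and the margin is a few percent. *)
Definition sep_den (z : R) : R := 50 * (100 + 35 * z + 12 * z ^ 2).

(* Each Heron centre is a linear fit of the square root it replaces on the interval. *)
Lemma alpha_cert_low u :
  141 / 100 <= u <= 3 ->
  577 * rat_den (3 + u) (3 - u) (quadP 3 3 u) (quadP 3 3 (- u))
         (heron (quadQ 3 u) ((152 + 90 * u) / 100)) (heron (quadQ 3 (- u)) ((603 + 615 * u) / 1000))
  <= sep_den (u ^ 2 - 2) * EA u.
Proof.
  intros Hu; apply Rminus_le_0.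
  apply (nonneg_of_bernstein _
    (22634568563392300660960698022500000000000000000 * 8 * 100 ^ 2 * 1000 ^ 2
     * (152 + 90 * u) ^ 2 * (603 + 615 * u) ^ 2)
    [4207011830549237418431502154081312091385502119;
     94024127953948122031896497377333924769038304880;
     1061488379139372963466972814486448457549786046700;
     7858744987178091201528879039064831190259687594000;
     41395494731424601336181567848075370595449821970000;
     160271049079828973898871451621111941491006432400000;
     463660678611040564677236565304293828212984069000000;
     1011127513262959168656808025816843953155010180000000;
     1666249180687152503492344308683788771355822000000000;
     2065099368249512010472180714568888854955800000000000;
     1897706768019976985992489751314146488720000000000000;
     1256781834379858056946097124186401008000000000000000;
     568701532673679107250801378185600000000000000000000;
     157934065703475581377583967744000000000000000000000;
     20388535553934811770163200000000000000000000000000]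
    (100 * u - 141) (300 - 100 * u)); try lra.
  - repeat apply Rmult_lt_0_compat; try apply pow_lt; lra.
  - unfold rat_den, heron, sep_den, EA, quadP, quadQ; simpl; field; lra.
  - repeat constructor; lra.
Qed.

Lemma alpha_cert_high u :
  3 <= u <= 465 / 100 ->
  577 * ((3 + u) * quadP 3 3 u ^ 2 * quadQ 3 u * quadP 3 3 (- u)
        * heron (quadQ 3 (- u)) ((88 * u - 19) / 100))
  <= sep_den (u ^ 2 - 2) * EA u.
Proof.
  intros Hu; apply Rminus_le_0.
  apply (nonneg_of_bernstein _ (2031173905033388671875000000000000 * 2 * 100 * (88 * u - 19))
    [2808889987500000000000000; 45775249610062500000000000; 339088007021534375000000000;
     1507726550711642353125000000; 4473072942568053363375000000; 9301592639717672682396250000;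
     13841149517491392248060700000; 14746375407491609743020307500; 11029765977521015079844593500;
     5519155547400959989231917375; 1663757987263669838983778490; 229022158083615312065142606]
    (100 * u - 300) (465 - 100 * u)); try lra.
  - unfold heron, sep_den, EA, quadP, quadQ; simpl; field; lra.
  - repeat constructor; lra.
Qed.

Lemma beta_cert v :
  0 <= v <= 442 / 100 ->
  sep_den (v ^ 2) * EB v
  <= 577 * rat_den (9 - v) (9 + v) (quadP 1 5 v) (quadP 1 5 (- v))
            (quadQ 5 v / heron (quadQ 5 v) ((2236 + 800 * v) / 1000))
            (quadQ 5 (- v) / heron (quadQ 5 (- v)) ((12 + (v - 1) ^ 2) / 6)).
Proof.
  intros Hv; apply Rminus_le_0.
  assert (0 < quadQ 5 v) by (apply quadQ_pos; lra).
  assert (0 < quadQ 5 (- v)) by (apply quadQ_pos; lra).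
  assert (0 < 12 + (v - 1) ^ 2) by (pose proof (pow2_ge_0 (v - 1)); lra).
  apply (nonneg_of_bernstein _
    (18420442926821838340801157768529705498154133868677934570312500000000000000000000000
     * (1000000 * quadQ 5 v + (2236 + 800 * v) ^ 2) ^ 2
     * (36 * quadQ 5 (- v) + (12 + (v - 1) ^ 2) ^ 2) ^ 2)
    [2052428934369251244807243347167968750000000000000000;
     49995977715668065944129467010498046875000000000000000;
     726029062784625940138536163330078125000000000000000000;
     7715362308682627891598144649295806884765625000000000000;
     62058202278314714974965656587172012329101562500000000000;
     389923467876743365719472728880911030578613281250000000000;
     1972866878444128291077443795309692321243286132812500000000;
     8263160786486166540828053632559255992247314453125000000000;
     29318912174356670065787934464925204738165551757812500000000;
     89847830083118064396945933344465053272634057617187500000000;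
     241366147085570096952261087018662134449484177416992187500000;
     573918428868891188100610796979988981201139762627441406250000;
     1212554259442972363042071427950914503370634936226412109375000;
     2272591707136215636519186952855309423199404617622525976562500;
     3754147479049278829158878590753130197663063135960008673828125;
     5410165955186129735741388937743957346580982216050414985562500;
     6707721381474179845201765239248313022757439409154050553148750;
     7021889156312422396067158550048289147459257646919304220392100;
     6050486421860136665612666722634757762623862323390041152079716;
     4129940429151439733772557283091087263732175825671762380839728;
     2098225025677734312002129386923829583717969679391439427260184;
     705829667800076165697298511288112787135424300158312715856912;
     118073155051201695059842106758563115318921344360078640102656]
    (100 * v) (442 - 100 * v)); try lra.
  - repeat apply Rmult_lt_0_compat; try apply pow_lt; nra.
  - unfold rat_den, heron, sep_den, EB, quadP, quadQ in *; simpl; field; nra.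
  - repeat constructor; lra.
Qed.

Lemma alpha_odd_nonneg u : 0 < u -> 0 <= alpha (- u) - alpha u.
Proof.
  intros Hu; rewrite alpha_odd_eq by lra.
  assert (0 < EA u) by (unfold EA; nra).
  apply Rlt_le, Rdiv_lt_0_compat; [nra | apply alpha_den_pos; lra].
Qed.

Lemma alpha_odd_ge u :
  141 / 100 <= u <= 465 / 100 -> u * (577 / sep_den (u ^ 2 - 2)) <= alpha (- u) - alpha u.
Proof.
  intros Hu; rewrite alpha_odd_eq by lra.
  assert (HD := alpha_den_pos u ltac:(lra)).
  assert (HS : 0 < sep_den (u ^ 2 - 2)) by (unfold sep_den; nra).
  enough (577 * alpha_den u <= sep_den (u ^ 2 - 2) * EA u).
  { replace (u * EA u / alpha_den u) with (u * (EA u / alpha_den u)) by (field; lra).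
    apply Rmult_le_compat_l; [lra|]; apply Rdiv_le_cross; lra. }
  assert (HP := quadP_pos 3 3 u ltac:(lra)); assert (HP' := quadP_pos 3 3 (- u) ltac:(lra)).
  assert (HQ := quadQ_pos 3 u ltac:(lra)); assert (HQ' := quadQ_pos 3 (- u) ltac:(lra)).
  assert (S := sqrt_lt_R0 _ HQ); assert (S' := sqrt_lt_R0 _ HQ').
  unfold alpha_den.
  destruct (Rle_lt_dec u 3) as [Hu3 | Hu3].
  - eapply Rle_trans; [| apply (alpha_cert_low u); lra].
    apply Rmult_le_compat_l; [lra|].
    apply rat_den_le; try lra; (split; [apply sqrt_pos | apply sqrt_le_heron; lra]).
  - (* for u >= 3 the conjugate term with coefficient 3 - u is nonpositive and is dropped *)
    eapply Rle_trans; [| apply (alpha_cert_high u); lra].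
    apply Rmult_le_compat_l; [lra|].
    assert (Ht := sqrt_le_heron (quadQ 3 (- u)) ((88 * u - 19) / 100) ltac:(lra) ltac:(lra)).
    assert (ES := sqrt_sqrt (quadQ 3 u) ltac:(lra)).
    unfold rat_den.
    set (s := sqrt (quadQ 3 u)) in *; set (t := sqrt (quadQ 3 (- u))) in *.
    set (p := quadP 3 3 u) in *; set (q := quadP 3 3 (- u)) in *.
    assert (Hneg : 0 <= (u - 3) * q * t * (s * t * p * q)) by (repeat apply Rmult_le_pos; lra).
    assert (Hup : (3 + u) * p ^ 2 * (s * s) * q * t
                  <= (3 + u) * p ^ 2 * (s * s) * q * heron (quadQ 3 (- u)) ((88 * u - 19) / 100))
      by (apply Rmult_le_compat_l; [repeat apply Rmult_le_pos|]; nra).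
    rewrite ES in Hup; nra.
Qed.

Lemma EB_neg v : 442 / 100 < v -> EB v < 0.
Proof.
  (* in t = v^2 - 19.5 >= 0 all coefficients of EB are negative *)
  intros Hv; unfold EB.
  assert (Ht : 0 <= v ^ 2 - 195 / 10) by nra.
  set (t := v ^ 2 - 195 / 10) in Ht.
  replace (1570464 + 698304 * v ^ 2 + 27728 * v ^ 4 - 3648 * v ^ 6)
    with (1570464 + 698304 * (t + 195 / 10) + 27728 * (t + 195 / 10) ^ 2 - 3648 * (t + 195 / 10) ^ 3)
    by (unfold t; ring).
  assert (0 <= t ^ 2) by nra; assert (0 <= t ^ 3) by (apply pow_le; lra).
  nra.
Qed.

Lemma beta_odd_le v : 0 <= v <= 442 / 100 -> beta (- v) - beta v <= v * (577 / sep_den (v ^ 2)).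
Proof.
  intros Hv; rewrite beta_odd_eq by lra.
  assert (HD := beta_den_pos v ltac:(lra)).
  assert (HS : 0 < sep_den (v ^ 2)) by (unfold sep_den; nra).
  enough (sep_den (v ^ 2) * EB v <= 577 * beta_den v).
  { replace (v * EB v / beta_den v) with (v * (EB v / beta_den v)) by (field; lra).
    apply Rmult_le_compat_l; [lra|]; apply Rdiv_le_cross; lra. }
  eapply Rle_trans; [apply (beta_cert v); lra |].
  apply Rmult_le_compat_l; [lra|].
  assert (HP := quadP_pos 1 5 v ltac:(lra)); assert (HP' := quadP_pos 1 5 (- v) ltac:(lra)).
  assert (HQ := quadQ_pos 5 v ltac:(lra)); assert (HQ' := quadQ_pos 5 (- v) ltac:(lra)).
  assert (0 < 12 + (v - 1) ^ 2) by (pose proof (pow2_ge_0 (v - 1)); lra).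
  unfold beta_den; apply rat_den_le; try lra;
    (split; [apply Rlt_le, div_heron_pos | apply div_heron_le_sqrt]; lra).
Qed.

Lemma beta_odd_nonpos v : 442 / 100 < v -> beta (- v) - beta v <= 0.
Proof.
  intros Hv.
  destruct (Rle_lt_dec v 9) as [Hv9 | Hv9].
  - rewrite beta_odd_eq by lra.
    assert (v * EB v <= 0) by (pose proof (EB_neg v Hv); nra).
    assert (HD := Rinv_0_lt_compat _ (beta_den_pos v ltac:(lra))).
    unfold Rdiv; nra.
  - unfold corner_slope.
    assert (D := Rmult_lt_0_compat _ _ (sqrt_quadQ_pos 5 v ltac:(lra)) (quadP_pos 1 5 v ltac:(lra))).
    assert (D' := Rmult_lt_0_compat _ _
                    (sqrt_quadQ_pos 5 (- v) ltac:(lra)) (quadP_pos 1 5 (- v) ltac:(lra))).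
    unfold Rdiv; pose proof (Rinv_0_lt_compat _ D); pose proof (Rinv_0_lt_compat _ D'); nra.
Qed.

Lemma odd_parts_compare u v :
  0 <= v -> 0 < u -> u ^ 2 = v ^ 2 + 2 ->
  u * (beta (- v) - beta v) <= v * (alpha (- u) - alpha u).
Proof.
  intros Hv Hu Huv.
  destruct (Rle_lt_dec v (442 / 100)) as [Hv4 | Hv4].
  - assert (HB := beta_odd_le v ltac:(lra)).
    assert (HA := alpha_odd_ge u ltac:(split; nra)).
    replace (u ^ 2 - 2) with (v ^ 2) in HA by lra.
    apply Rle_trans with (u * (v * (577 / sep_den (v ^ 2)))); [apply Rmult_le_compat_l; lra|].
    replace (u * (v * (577 / sep_den (v ^ 2)))) with (v * (u * (577 / sep_den (v ^ 2)))) by ring.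
    apply Rmult_le_compat_l; lra.
  - assert (HB := beta_odd_nonpos v Hv4); assert (HA := alpha_odd_nonneg u Hu).
    assert (u * (beta (- v) - beta v) <= 0) by nra.
    assert (0 <= v * (alpha (- u) - alpha u)) by nra.
    lra.
Qed.

Lemma dOmega_UV_nonpos l : 1 <= l -> dOmega_UV l <= 0.
Proof.
  intros Hl; destruct (Ul_Vl_facts l Hl) as [HU [HV HUV]].
  assert (C := odd_parts_compare (Ul l) (Vl l) HV HU HUV).
  assert (0 < sqrt 8 / l) by (apply Rdiv_lt_0_compat; [apply sqrt_lt_R0|]; lra).
  unfold dOmega_UV; nra.
Qed.

Theorem mainTheorem3 : forall l : R, 1 <= l -> Omega l <= Omega 1.
Proof.
  intros l Hl; rewrite !Omega_eq by lra.
  apply (derive_nonpos_le Omega_UV dOmega_UV 1 l Hl).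
  - intros x Hx; apply Omega_UV_deriv; lra.
  - intros x Hx; apply dOmega_UV_nonpos; lra.
Qed.
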